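(* For every $\omega\in S$ and every $\epsilon>0$ there exist $\omega'\in S$ with $|\omega'-\omega|<\epsilon$ and a Seifert matrix $V$ such that $\Delta_V(t)$ has exactly two nonreal roots, namely $\omega'$ and $\bar\omega'$, both simple and lying on the unit circle. Consequently, as a function of $\zeta\in S$, $\sigma_\zeta(V)=0$ whenever $\mathrm{Re}\,\zeta>\mathrm{Re}\,\omega'$, and $\sigma_\zeta(V)$ equals a nonzero constant whenever $\mathrm{Re}\,\zeta<\mathrm{Re}\,\omega'$.
   Context: A Seifert matrix is a square integral matrix $V$ with $\det(V-V^T)=\pm1$; $\Delta_V(t)=\det(V-tV^T)$; for a unit complex number $\zeta$, $\sigma_\zeta(V)$ is the signature of $(1-\zeta)V+(1-\bar\zeta)V^T$. $S$ is the set of unit complex numbers with positive imaginary part. *)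

From HB Require Import structures.
From mathcomp Require Import all_boot all_order all_algebra.
From mathcomp Require Import reals complex.
Set Implicit Arguments. Unset Strict Implicit. Unset Printing Implicit Defensive.
Import Order.TTheory GRing.Theory Num.Theory.
Local Open Scope ring_scope.

Definition seifert (n : nat) (V : 'M[int]_n) : Prop :=
  \det (V - V^T) = 1 \/ \det (V - V^T) = -1.

Definition mxC (R : realType) (n : nat) (V : 'M[int]_n) : 'M[R[i]]_n :=
  map_mx (fun x : int => x%:~R) V.

Definition alexC (R : realType) (n : nat) (V : 'M[int]_n) : {poly R[i]} :=
  \det (map_mx polyC (mxC R V) - 'X *: map_mx polyC (mxC R V)^T).

Definition inS (R : realType) (z : R[i]) : Prop := `|z| = 1 /\ 0 < 'Im z.

(* Eigenvalues (with multiplicity) of a complex square matrix: the roots of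
   its characteristic polynomial, listed with multiplicity. *)
Definition eigenseq (R : realType) (n : nat) (A : 'M[R[i]]_n) : seq R[i] :=
  sval (closed_field_poly_normal (char_poly A)).

Definition signature (R : realType) (n : nat) (A : 'M[R[i]]_n) : int :=
  (count (fun z => 0 < z) (eigenseq A))%:Z - (count (fun z => z < 0) (eigenseq A))%:Z.

Definition tl_sig (R : realType) (n : nat) (V : 'M[int]_n) (zeta : R[i]) : int :=
  signature ((1 - zeta) *: mxC R V + (1 - zeta^*) *: (mxC R V)^T).

From HB Require Import structures.
From mathcomp Require Import all_boot all_order all_algebra.
From mathcomp Require Import reals complex.
From mathcomp Require Import ring lra.
Import Order.TTheory GRing.Theory Num.Theory.
Local Open Scope ring_scope.
Set Implicit Arguments. Unset Strict Implicit. Unset Printing Implicit Defensive.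

(* Take for V the block matrix [[A, 1], [0, 1]] with A = [[a, b], [b, d]] symmetric, so that
   V - V^T is unimodular. Both Delta_V(t) and the characteristic polynomial of the Tristram-Levine
   form factor over the eigenvalues m of A: Delta_V is the product over m of t + m (1 - t)^2, and for
   zeta on the unit circle, with r = |1 - zeta|^2 = 2 - 2 Re zeta, the form has for each m a pair of
   real eigenvalues with sum r (1 + m) and product r (r m - 1). If m1 > 1/4 and m2 < 0, the factor
   of m1 has two conjugate unit roots of real part c = 1 - 1/(2 m1), that of m2 has real roots, and
   the signature is 0 for r m1 < 1 and 2 for r m1 > 1, so it jumps exactly at Re zeta = c.
   Finally A = [[0, q], [q, -pq]] has 1/m1 = (p + sqrt(p^2 + 4))/(2q), within 1/q of p/q, so c can
   be placed anywhere in (-1, 1). *)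

Section SmallDeterminants.
Variable T : comNzRingType.
Implicit Types f : nat -> nat -> T.

Definition row0_minor f (j k l : nat) := f (bump 0 k) (bump j l).

Lemma det_mxf_row0 n f :
  \det (\matrix_(i < n.+1, j < n.+1) f i j) =
  \sum_(j < n.+1) f 0%N j * (-1) ^+ j * \det (\matrix_(k < n, l < n) row0_minor f j k l).
Proof.
rewrite (expand_det_row _ ord0); apply: eq_bigr => j _.
rewrite mxE /cofactor add0n mulrA; congr (_ * \det _).
by apply/matrixP => k l; rewrite !mxE.
Qed.

Definition det3f f :=
  f 0 0 * (f 1 1 * f 2 2 - f 1 2 * f 2 1)
  - f 0 1 * (f 1 0 * f 2 2 - f 1 2 * f 2 0)
  + f 0 2 * (f 1 0 * f 2 1 - f 1 1 * f 2 0).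

Lemma det_mxf3 f : \det (\matrix_(i < 3, j < 3) f i j) = det3f f.
Proof.
rewrite det_mxf_row0 !big_ord_recl big_ord0 !det_mxf_row0 !big_ord_recl !big_ord0.
by rewrite !det_mx11 !mxE /det3f /row0_minor /bump /=; ring.
Qed.

Lemma det_mxf4 f : \det (\matrix_(i < 4, j < 4) f i j) =
  f 0 0 * det3f (row0_minor f 0) - f 0 1 * det3f (row0_minor f 1)
  + f 0 2 * det3f (row0_minor f 2) - f 0 3 * det3f (row0_minor f 3).
Proof. by rewrite det_mxf_row0 !big_ord_recl big_ord0 !det_mxf3 /=; ring. Qed.

End SmallDeterminants.

Definition seifert_of_sym_entry (a b d : int) (i j : nat) : int :=
  match i, j with
  | 0, 0 => a | 0, 1 => b | 1, 0 => b | 1, 1 => d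
  | 0, 2 => 1 | 1, 3 => 1 | 2, 2 => 1 | 3, 3 => 1
  | _, _ => 0 end.

Definition seifert_of_sym (a b d : int) : 'M[int]_4 :=
  \matrix_(i < 4, j < 4) seifert_of_sym_entry a b d i j.

Lemma seifert_of_sym_seifert a b d : seifert (seifert_of_sym a b d).
Proof.
pose f i j := seifert_of_sym_entry a b d i j - seifert_of_sym_entry a b d j i.
left; rewrite (_ : _ - _ = \matrix_(i < 4, j < 4) f i j).
  by rewrite det_mxf4 /det3f /row0_minor /bump /f /=; ring.
by apply/matrixP => i j; rewrite !mxE.
Qed.

Section Polynomials.
Variable R : realType.
Local Notation C := R[i].

Lemma alexC_seifert_of_sym a b d : alexC R (seifert_of_sym a b d) =
  'X ^+ 2 + 'X * (1 - 'X) ^+ 2 * (a + d)%:~R + ((1 - 'X) ^+ 2) ^+ 2 * (a * d - b ^+ 2)%:~R.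
Proof.
pose f i j := ((seifert_of_sym_entry a b d i j)%:~R : C)%:P
  - 'X * ((seifert_of_sym_entry a b d j i)%:~R)%:P.
rewrite /alexC (_ : _ - _ = \matrix_(i < 4, j < 4) f i j).
  by rewrite det_mxf4 /det3f /row0_minor /bump /f /=; ring.
by apply/matrixP => i j; rewrite !mxE.
Qed.

Definition tl_form n (V : 'M[int]_n) (zeta : C) :=
  (1 - zeta) *: mxC R V + (1 - zeta^*) *: (mxC R V)^T.

Lemma char_poly_tl_form_seifert_of_sym a b d (zeta : C) :
  let U := (1 - zeta)%:P in let W := (1 - zeta^*)%:P in
  let F := 'X ^+ 2 - (U + W) * 'X - U * W in let G := (U + W) ^+ 2 - (U + W) * 'X in
  char_poly (tl_form (seifert_of_sym a b d) zeta) =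
  F ^+ 2 + F * G * (a + d)%:~R + G ^+ 2 * (a * d - b ^+ 2)%:~R.
Proof.
pose f i j := 'X *+ (i == j)%N - ((1 - zeta) * (seifert_of_sym_entry a b d i j)%:~R
                       + (1 - zeta^*) * (seifert_of_sym_entry a b d j i)%:~R)%:P.
rewrite /char_poly (_ : char_poly_mx _ = \matrix_(i < 4, j < 4) f i j).
  by rewrite det_mxf4 /det3f /row0_minor /bump /f /=; ring.
by apply/matrixP => i j; rewrite !mxE.
Qed.
End Polynomials.

Lemma mul_XsubC (T : comNzRingType) (u v : T) :
  ('X - u%:P) * ('X - v%:P) = 'X ^+ 2 - (u + v)%:P * 'X + (u * v)%:P.
Proof. by rewrite rmorphD rmorphM /=; ring. Qed.

Lemma alexander_quadratic (T : comNzRingType) (m k u v : T) :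
  m * (2 - k) = 1 -> u + v = k -> u * v = 1 ->
  'X + (1 - 'X) ^+ 2 * m%:P = m%:P * (('X - u%:P) * ('X - v%:P)).
Proof.
move=> hm huv1 huv2; rewrite mul_XsubC huv1 huv2.
transitivity ('X + (1 - 'X) ^+ 2 * m%:P + 'X * (m * (2 - k) - 1)%:P).
  by rewrite hm subrr rmorph0 mulr0 addr0.
by rewrite !(rmorphB, rmorphM, rmorph_nat) /=; ring.
Qed.

Lemma real_vieta (R : rcfType) (s p : R) :
  4 * p <= s ^+ 2 -> exists x y : R, x + y = s /\ x * y = p.
Proof.
move=> hdisc.
have hsq : Num.sqrt (s ^+ 2 - 4 * p) ^+ 2 = s ^+ 2 - 4 * p by rewrite sqr_sqrtr // subr_ge0.
exists ((s + Num.sqrt (s ^+ 2 - 4 * p)) / 2), ((s - Num.sqrt (s ^+ 2 - 4 * p)) / 2).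
split; first by field.
rewrite (_ : _ * _ = (s ^+ 2 - Num.sqrt (s ^+ 2 - 4 * p) ^+ 2) / 4); first by rewrite hsq; field.
by field.
Qed.

Section SignPairs.
Variable R : realDomainType.
Implicit Types x y : R.

Lemma sgzD_mul_lt0 x y : x * y < 0 -> sgz x + sgz y = 0.
Proof.
move=> hxy; case: (ltrgtP x 0) => hx.
- by rewrite (ltr0_sgz hx) (@gtr0_sgz _ y) //; nra.
- by rewrite (gtr0_sgz hx) (@ltr0_sgz _ y) //; nra.
- by move: hxy; rewrite hx mul0r ltxx.
Qed.

Lemma sgzD_mul_gt0 x y : 0 < x * y -> 0 < x + y -> sgz x + sgz y = 2.
Proof. by move=> hxy hs; rewrite !gtr0_sgz //; nra. Qed.
End SignPairs.

Section ComplexOfReal.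
Variable R : realType.
Local Open Scope complex_scope.

Lemma polyC_intr_real (z : int) (x : R) : x = z%:~R -> z%:~R = (x%:C)%:P :> {poly R[i]}.
Proof. by move->; rewrite !rmorph_int. Qed.

Lemma signature_prod_XsubC n (A : 'M[R[i]]_n) (l : seq R) :
  char_poly A = \prod_(x <- l) ('X - (x%:C)%:P) -> signature A = \sum_(x <- l) sgz x.
Proof.
move=> hA; have /permP hperm : perm_eq (eigenseq A) (map (real_complex R) l).
  rewrite /eigenseq; case: closed_field_poly_normal => r /= hr.
  apply: prod_XsubC_eq; rewrite big_map -hA.
  by rewrite hr (monicP (char_poly_monic A)) scale1r.
rewrite /signature !hperm {hA hperm}; elim: l => [|x l IH]; first by rewrite big_nil.
rewrite big_cons -IH /= !ltcR.
by case: (ltrgtP x 0) => hx; rewrite ?(gtr0_sgz hx) ?(ltr0_sgz hx) ?hx ?sgz0 /= !PoszD; ring.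
Qed.
End ComplexOfReal.

Lemma sqr_subr_le_normB (R : realDomainType) (x y : R) :
  0 <= x -> 0 <= y -> (x - y) ^+ 2 <= `|x ^+ 2 - y ^+ 2|.
Proof.
by move=> hx hy; case: (lerP y x) => hxy; [rewrite ger0_norm | rewrite ltr0_norm]; nra.
Qed.

Section UnitCircle.
Variable R : realType.
Local Open Scope complex_scope.
Implicit Types c x y : R.

Lemma inS_Complex x y : inS (Complex x y) <-> x ^+ 2 + y ^+ 2 = 1 /\ 0 < y.
Proof.
rewrite /inS normc_def -complexIm ltcR /=; split=> -[hn hy]; split => //.
  by rewrite -[LHS]sqr_sqrtr ?addr_ge0 ?sqr_ge0 //; case: hn => ->; rewrite expr1n.
by rewrite hn sqrtr1.
Qed.

Definition unit_circle_pt c : R[i] := Complex c (Num.sqrt (1 - c ^+ 2)).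

Lemma sqr_Im_unit_circle_pt c : -1 <= c <= 1 -> Num.sqrt (1 - c ^+ 2) ^+ 2 = 1 - c ^+ 2.
Proof. by move=> /andP[hl hu]; rewrite sqr_sqrtr //; nra. Qed.

Lemma unit_circle_ptE c y : c ^+ 2 + y ^+ 2 = 1 -> 0 <= y -> unit_circle_pt c = Complex c y.
Proof.
move=> hcy hy; congr Complex.
by rewrite -(ger0_norm hy) -sqrtr_sqr (_ : 1 - c ^+ 2 = y ^+ 2) //; lra.
Qed.

Lemma unit_circle_pt_inS c : -1 < c < 1 -> inS (unit_circle_pt c).
Proof.
move=> /andP[hl hu]; apply/inS_Complex.
by rewrite sqr_Im_unit_circle_pt ?sqrtr_gt0; [split; [lra|nra] | apply/andP; split; lra].
Qed.

Lemma unit_circle_ptD_conj c : unit_circle_pt c + (unit_circle_pt c)^* = (2 * c)%:C.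
Proof. by apply/eqP; rewrite eq_complex /= subrr eqxx andbT; apply/eqP; ring. Qed.

Lemma unit_circle_ptM_conj c : -1 <= c <= 1 -> unit_circle_pt c * (unit_circle_pt c)^* = 1.
Proof.
move=> hc; have hs := sqr_Im_unit_circle_pt hc.
by apply/eqP; rewrite eq_complex /=; apply/andP; split; apply/eqP; nra.
Qed.

Lemma unit_circle_pt_neq_conj c : -1 < c < 1 -> unit_circle_pt c != (unit_circle_pt c)^*.
Proof.
move=> /andP[hl hu]; rewrite eq_complex /= eqxx /= -subr_eq0 opprK -mulr2n mulrn_eq0 /=.
by rewrite sqrtr_eq0 -ltNge; nra.
Qed.

Lemma unit_circle_pt_close c c0 (eps : R) : -1 <= c <= 1 -> -1 <= c0 <= 1 -> 0 < eps ->
  `|c - c0| < eps ^+ 2 / 4 -> `|unit_circle_pt c - unit_circle_pt c0| < Complex eps 0.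
Proof.
move=> hc hc0 heps hclose.
rewrite normc_def (_ : Complex eps 0 = eps%:C) // ltcR /=.
rewrite -(ger0_norm (ltW heps)) -sqrtr_sqr ltr_sqrt ?exprn_gt0 //.
have hIm := sqr_subr_le_normB (sqrtr_ge0 (1 - c ^+ 2)) (sqrtr_ge0 (1 - c0 ^+ 2)).
rewrite !sqr_Im_unit_circle_pt // (_ : 1 - c ^+ 2 - (1 - c0 ^+ 2) = (c0 - c) * (c0 + c)) in hIm;
  last by ring.
rewrite normrM distrC in hIm.
move: hc hc0 => /andP[hl hu] /andP[hl0 hu0].
have hsum : `|c0 + c| <= 2 by rewrite ler_norml; apply/andP; split; lra.
have hdiff : `|c - c0| <= 2 by rewrite ler_norml; apply/andP; split; lra.
have hsq : (c - c0) ^+ 2 = `|c - c0| ^+ 2 by rewrite real_normK // num_real.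
have hn := normr_ge0 (c - c0).
nra.
Qed.

End UnitCircle.

Section SeifertOfSymSpectrum.
Variable R : realType.
Local Open Scope complex_scope.
Local Notation C := R[i].
Variables (a b d : int) (m1 m2 c : R).
Hypotheses (eig_sum : m1 + m2 = (a + d)%:~R) (eig_prod : m1 * m2 = (a * d - b ^+ 2)%:~R).
Hypotheses (m1_c : m1 * (2 - 2 * c) = 1) (c_bounds : -1 < c < 1) (m2_lt0 : m2 < 0).
Local Notation V := (seifert_of_sym a b d).
Local Notation w := (unit_circle_pt c).

Lemma m1_gt0 : 0 < m1.
Proof. by case/andP: c_bounds => _ hc; move: m1_c; nra. Qed.

Lemma alexC_seifert_of_sym_factor : exists u v : R, alexC R V =
  ((m1 * m2)%:C)%:P * (('X - w%:P) * ('X - w^*%:P)) * (('X - (u%:C)%:P) * ('X - (v%:C)%:P)).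
Proof.
have m2_neq0 : m2 != 0 by rewrite ltr0_neq0.
have [u [v [hsum_uv hprod_uv]]] : exists u v : R, u + v = 2 - m2^-1 /\ u * v = 1.
  have hinv : m2^-1 < 0 by rewrite invr_lt0.
  by apply: real_vieta; nra.
exists u, v.
have c_le : -1 <= c <= 1 by case/andP: c_bounds => /ltW -> /ltW ->.
have hw : 'X + (1 - 'X) ^+ 2 * (m1%:C)%:P = (m1%:C)%:P * (('X - w%:P) * ('X - w^*%:P)).
  apply: (alexander_quadratic (k := (2 * c)%:C)); last 2 first.
  - exact: unit_circle_ptD_conj.
  - exact: unit_circle_ptM_conj.
  by rewrite -(rmorph_nat (real_complex R) 2) -rmorphB -rmorphM m1_c.
have hm2 : 'X + (1 - 'X) ^+ 2 * (m2%:C)%:P =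
    (m2%:C)%:P * (('X - (u%:C)%:P) * ('X - (v%:C)%:P)).
  apply: (alexander_quadratic (k := (2 - m2^-1)%:C)).
  - by rewrite -(rmorph_nat (real_complex R) 2) -rmorphB -rmorphM subKr mulfV.
  - by rewrite -rmorphD hsum_uv.
  - by rewrite -rmorphM hprod_uv.
rewrite alexC_seifert_of_sym (polyC_intr_real eig_sum) (polyC_intr_real eig_prod).
rewrite !rmorphD !rmorphM /=.
transitivity (('X + (1 - 'X) ^+ 2 * (m1%:C)%:P) * ('X + (1 - 'X) ^+ 2 * (m2%:C)%:P)); first by ring.
by rewrite hw hm2; ring.
Qed.

Lemma seifert_of_sym_alex_roots :
  (root (alexC R V) w /\ root (alexC R V) w^*) /\
  ((forall z : C, root (alexC R V) z -> z \isn't Num.real -> z = w \/ z = w^*) /\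
   ~~ (('X - w%:P) ^+ 2 %| alexC R V) /\ ~~ (('X - w^*%:P) ^+ 2 %| alexC R V)).
Proof.
have [u [v ->]] := alexC_seifert_of_sym_factor.
have hK : (m1 * m2)%:C != 0 by rewrite fmorph_eq0 mulf_neq0 ?(gt_eqF m1_gt0) ?(lt_eqF m2_lt0).
have hroot z : root (((m1 * m2)%:C)%:P * (('X - w%:P) * ('X - w^*%:P)) *
                       (('X - (u%:C)%:P) * ('X - (v%:C)%:P))) z =
               [|| z == w, z == w^*, z == u%:C | z == v%:C].
  by rewrite !rootM rootC !root_XsubC (negbTE hK) /= !orbA.
have real_C (x : R) : x%:C \is Num.real by rewrite complex_real.
have hw_real : w \isn't Num.real by rewrite complex_real sqrtr_eq0 -ltNge; case/andP: c_bounds; nra.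
have hwc_real : w^* \isn't Num.real.
  by rewrite complex_real oppr_eq0 sqrtr_eq0 -ltNge; case/andP: c_bounds; nra.
have ne_real (z : C) (x : R) : z \isn't Num.real -> (z == x%:C) = false.
  by move=> hz; apply: contraNF hz => /eqP ->.
have hw_conj : (w == w^*) = false by apply/negbTE/unit_circle_pt_neq_conj.
split; first by rewrite !hroot !eqxx !orbT.
split.
  move=> z; rewrite hroot => /or4P[/eqP->|/eqP->|/eqP->|/eqP->] hz; [by left|by right|..].
  - by rewrite real_C in hz.
  - by rewrite real_C in hz.
split.
- rewrite [X in _ %| X](_ : _ = ('X - w%:P) * (((m1 * m2)%:C)%:P * ('X - w^*%:P) *
                       (('X - (u%:C)%:P) * ('X - (v%:C)%:P)))); last by ring.
  rewrite expr2 dvdp_mul2l ?polyXsubC_eq0 // dvdp_XsubCl !rootM rootC !root_XsubC.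
  by rewrite (negbTE hK) hw_conj !ne_real.
- rewrite [X in _ %| X](_ : _ = ('X - w^*%:P) * (((m1 * m2)%:C)%:P * ('X - w%:P) *
                       (('X - (u%:C)%:P) * ('X - (v%:C)%:P)))); last by ring.
  rewrite expr2 dvdp_mul2l ?polyXsubC_eq0 // dvdp_XsubCl !rootM rootC !root_XsubC.
  by rewrite (negbTE hK) eq_sym hw_conj !ne_real.
Qed.

Lemma char_poly_tl_form_unit (x y : R) : x ^+ 2 + y ^+ 2 = 1 ->
  let r := 2 - 2 * x in
  char_poly (tl_form V (Complex x y)) =
  ('X ^+ 2 - ((r * (1 + m1))%:C)%:P * 'X + ((r * (r * m1 - 1))%:C)%:P) *
  ('X ^+ 2 - ((r * (1 + m2))%:C)%:P * 'X + ((r * (r * m2 - 1))%:C)%:P).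
Proof.
move=> hxy r; rewrite char_poly_tl_form_seifert_of_sym /=.
have hsum : (1 - Complex x y) + (1 - (Complex x y)^*) = r%:C.
  by apply/eqP; rewrite eq_complex /= /r; apply/andP; split; apply/eqP; ring.
have hprod : (1 - Complex x y) * (1 - (Complex x y)^*) = r%:C.
  by apply/eqP; rewrite eq_complex /= /r; apply/andP; split; apply/eqP; nra.
rewrite -rmorphD -rmorphM hsum hprod.
rewrite (polyC_intr_real eig_sum) (polyC_intr_real eig_prod).
by rewrite !(rmorphB, rmorphD, rmorphM, rmorph1) /=; ring.
Qed.

Lemma tl_sig_seifert_of_sym (zeta : C) : inS zeta ->
  ('Re w < 'Re zeta -> tl_sig V zeta = 0) /\ ('Re zeta < 'Re w -> tl_sig V zeta = 2).
Proof.
case: zeta => x y /inS_Complex[hxy hy]; rewrite -!complexRe !ltcR /=.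
have hr : 0 < 2 - 2 * x by nra.
have roots (m : R) : exists l1 l2 : R,
    l1 + l2 = (2 - 2 * x) * (1 + m) /\ l1 * l2 = (2 - 2 * x) * ((2 - 2 * x) * m - 1).
  by apply: real_vieta; have := sqr_ge0 ((2 - 2 * x) * (1 - m)); nra.
have [l1 [l2 [hs1 hp1]]] := roots m1.
have [l3 [l4 [hs2 hp2]]] := roots m2.
have -> : tl_sig V (Complex x y) = sgz l1 + sgz l2 + (sgz l3 + sgz l4).
  rewrite /tl_sig (@signature_prod_XsubC _ _ _ [:: l1; l2; l3; l4]).
    by rewrite !big_cons big_nil addr0 addrA.
  rewrite -/(tl_form V _) char_poly_tl_form_unit // !big_cons big_nil mulr1 mulrA !mul_XsubC.
  by rewrite -!rmorphD -!rmorphM hs1 hp1 hs2 hp2.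
rewrite (@sgzD_mul_lt0 _ l3 l4) ?addr0; last by rewrite hp2 pmulr_rlt0 //; move: m2_lt0; nra.
have := m1_c; have := m1_gt0; split => hxc.
- by apply: sgzD_mul_lt0; rewrite hp1 pmulr_rlt0 //; nra.
- by apply: sgzD_mul_gt0; rewrite ?hp1 ?hs1 pmulr_rgt0 //; nra.
Qed.
End SeifertOfSymSpectrum.

Lemma sym_family_eigen (R : rcfType) (p q : nat) (S : R) : S ^+ 2 = p%:R ^+ 2 + 4 ->
  let m1 := q%:R * (S - p%:R) / 2 in let m2 := - (q%:R * (S + p%:R) / 2) in
  m1 + m2 = (0 + - (p * q)%N%:Z)%:~R /\ m1 * m2 = (0 * - (p * q)%N%:Z - q%:Z ^+ 2)%:~R.
Proof.
move=> hS m1 m2; rewrite add0r mul0r add0r !intrN rmorphXn /= -!pmulrn natrM.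
split; first by rewrite /m1 /m2; field.
rewrite /m1 /m2 (_ : _ * _ = - (q%:R ^+ 2 * (S ^+ 2 - p%:R ^+ 2) / 4)); last by field.
by rewrite hS; field.
Qed.

Lemma seifert_of_sym_dense (R : realType) (c0 delta : R) : -1 < c0 < 1 -> 0 < delta ->
  exists (a b d : int) (m1 m2 c : R),
    [/\ m1 + m2 = (a + d)%:~R, m1 * m2 = (a * d - b ^+ 2)%:~R, m1 * (2 - 2 * c) = 1,
        m2 < 0 & -1 < c < 1 /\ `|c - c0| < delta].
Proof.
move=> /andP[hl hu] hdelta.
pose q := (Num.truncn (delta^-1 + (1 + c0)^-1)).+1.
pose p := Num.truncn ((2 - 2 * c0) * q%:R).
have hq : delta^-1 + (1 + c0)^-1 < q%:R by exact: truncnS_gt.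
have /andP[hp1 hp2] : p%:R <= (2 - 2 * c0) * q%:R < p.+1%:R.
  by apply: truncn_itv; rewrite mulr_ge0 ?ler0n //; lra.
move: hq hp1 hp2; rewrite -natr1.
set P : R := p%:R; set Q : R := q%:R => hq hp1 hp2.
have hP : 0 <= P by rewrite ler0n.
have hdelta_inv : delta * delta^-1 = 1 by rewrite mulfV ?gt_eqF.
have hc0_inv : (1 + c0) * (1 + c0)^-1 = 1 by rewrite mulfV // gt_eqF //; lra.
have hdelta_inv_gt0 : 0 < delta^-1 by rewrite invr_gt0.
have hc0_inv_gt0 : 0 < (1 + c0)^-1 by rewrite invr_gt0; lra.
have hQdelta : 1 < Q * delta by nra.
have hQc0 : 1 < Q * (1 + c0) by nra.
have hQ : 0 < Q by nra.
pose S := Num.sqrt (P ^+ 2 + 4).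
have hS2 : S ^+ 2 = P ^+ 2 + 4 by rewrite sqr_sqrtr //; nra.
have hS0 : 0 <= S by exact: sqrtr_ge0.
have hSP : P < S <= P + 2 by apply/andP; split; nra.
have [heig_sum heig_prod] := sym_family_eigen q hS2.
pose c := 1 - (S + P) / (4 * Q).
have hc : 4 * Q * (1 - c) = S + P by rewrite /c; field; rewrite gt_eqF.
exists 0, q%:Z, (- (p * q)%N%:Z), (Q * (S - P) / 2), (- (Q * (S + P) / 2)), c.
split => //.
- rewrite /c (_ : Q * (S - P) / 2 * (2 - 2 * (1 - (S + P) / (4 * Q))) = (S ^+ 2 - P ^+ 2) / 4).
    by rewrite hS2; field.
  by field; rewrite gt_eqF.
- case/andP: hSP => hSP1 hSP2; nra.
case/andP: hSP => hSP1 hSP2.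
have hlo : Q * (c0 - c) <= 1 / 2 by nra.
have hhi : Q * (c - c0) < 1 / 2 by nra.
split; first by apply/andP; split; nra.
by rewrite ltr_norml; apply/andP; split; nra.
Qed.

Theorem mainTheorem5 (R : realType) (w : R[i]) (eps : R) :
  inS w -> 0 < eps ->
  exists (w' : R[i]) (n : nat) (V : 'M[int]_n),
    [/\ inS w' /\ `|w' - w| < Complex eps 0, seifert V,
        root (alexC R V) w' /\ root (alexC R V) w'^*,
        (forall z : R[i], root (alexC R V) z -> z \isn't Num.real ->
           z = w' \/ z = w'^*) /\
        ~~ (('X - w'%:P) ^+ 2 %| alexC R V) /\ ~~ (('X - w'^*%:P) ^+ 2 %| alexC R V)
      & exists c : int, c != 0 /\
        forall zeta : R[i], inS zeta ->
          ('Re w' < 'Re zeta -> tl_sig V zeta = 0) /\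
          ('Re zeta < 'Re w' -> tl_sig V zeta = c)].
Proof.
case: w => c0 s0 /inS_Complex[hcs0 hs0] heps.
have hc0 : -1 < c0 < 1 by apply/andP; split; nra.
have [a [b [d [m1 [m2 [c [heig_sum heig_prod hm1 hm2 [hc hclose]]]]]]]] :=
  seifert_of_sym_dense hc0 (divr_gt0 (exprn_gt0 2 heps) (ltr0n _ 4)).
have [hroots hsimple] := seifert_of_sym_alex_roots heig_sum heig_prod hm1 hc hm2.
exists (unit_circle_pt c), 4%N, (seifert_of_sym a b d); split => //.
- split; first exact: unit_circle_pt_inS.
  rewrite -(unit_circle_ptE hcs0 (ltW hs0)).
  by apply: unit_circle_pt_close => //; [case/andP: hc | case/andP: hc0] => /ltW -> /ltW ->.
- exact: seifert_of_sym_seifert.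
- exists 2; split => // zeta; exact: tl_sig_seifert_of_sym heig_sum heig_prod hm1 hc hm2 zeta.
Qed.
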